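(* Let $\sigma>0$, $b:\mathbb R^d\to\mathbb R^d$, and let $\kappa:(0,\infty)\to\mathbb R$ satisfy $\kappa(r)\le\inf\{-\frac{2}{\sigma^2}\frac{(x-y)\cdot(b(x)-b(y))}{|x-y|^2}: x,y\in\mathbb R^d,\ |x-y|=r\}$, and suppose $\kappa$ is continuous on $(0,\infty)$, bounded below on $(0,\infty)$, and $\liminf_{r\to\infty}\kappa(r)>0$. Then there exists a function $f:[0,\infty)\to\mathbb R$ such that: 1. $f(0)=0$, and $f$ is concave and strictly increasing on $[0,\infty)$; 2. $f\in C^2[0,\infty)$ and there exists a constant $c_0>0$ such that $f''(r)-\frac14 r\kappa(r)f'(r)\le-\frac{c_0}{2}f(r)$ for all $r\ge0$; 3. there exists a constant $\varphi_0>0$ such that $\frac{\varphi_0}{4}r\le f(r)\le r$ for all $r\ge0$. The constants $c_0,\varphi_0$ depend only on the function $\kappa$.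
   Context: At $r=0$, where $\kappa$ is undefined, the term $\frac14 r\kappa(r)f'(r)$ is interpreted as $0$. *)

From Stdlib Require Import Reals.
From Coquelicot Require Import Coquelicot.
From mathcomp Require Import ssreflect ssrfun ssrbool eqtype ssrnat fintype bigop.
Open Scope R_scope.

Definition vec (d : nat) := 'I_d -> R.
Definition vdot {d : nat} (x y : vec d) : R := \big[Rplus/0]_(i < d) (x i * y i).
Definition vsub {d : nat} (x y : vec d) : vec d := fun i => x i - y i.
Definition vnorm {d : nat} (x : vec d) : R := sqrt (vdot x x).

Definition has_deriv_nonneg (f f' : R -> R) : Prop :=
  forall r, 0 <= r ->
    filterlim (fun y => (f y - f r) / (y - r))
      (within (fun y => 0 <= y /\ y <> r) (locally r)) (locally (f' r)).

Definition cont_nonneg (g : R -> R) : Prop :=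
  forall r, 0 <= r ->
    filterlim g (within (fun y => 0 <= y) (locally r)) (locally (g r)).

Definition C2_nonneg (f f1 f2 : R -> R) : Prop :=
  has_deriv_nonneg f f1 /\ has_deriv_nonneg f1 f2 /\ cont_nonneg f2.

Definition concave_nonneg (f : R -> R) : Prop :=
  forall x y t, 0 <= x -> 0 <= y -> 0 <= t <= 1 ->
    t * f x + (1 - t) * f y <= f (t * x + (1 - t) * y).

Definition strict_incr_nonneg (f : R -> R) : Prop :=
  forall x y, 0 <= x -> x < y -> f x < f y.

(** The profile f(r) = δ r + (1 - δ)/β (1 - e^{-β r}) does the job: its
    derivatives f' = δ + (1 - δ) e^{-β r} and f'' = -β (1 - δ) e^{-β r} make f
    concave, increasing and squeezed between δ r and r.  Fix R₁ with κ ≥ ε on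
    [R₁, ∞) and K with r κ(r) ≥ -K on [0, R₁].  Beyond R₁, f' ≥ δ and f ≤ r give
    f'' - r κ f'/4 ≤ -ε δ r/4 ≤ -ε δ f/4.  Below R₁, β = K/4 + 1 lets f'' absorb
    the drift term up to -(1 - δ) e^{-β r} + K δ/4, and δ = e^{-β R₁}/(2(K + 1))
    keeps this below -e^{-β R₁}/4, which beats -c₀ f/2 as soon as
    c₀ R₁ ≤ e^{-β R₁}/2.
    The profile depends on κ alone. *)

From Stdlib Require Import Reals Lra Psatz.
From Coquelicot Require Import Coquelicot.
From mathcomp Require Import ssreflect ssrfun ssrbool eqtype ssrnat fintype bigop.
Open Scope R_scope.

Lemma exp_le_compat x y : x <= y -> exp x <= exp y.
Proof.
by case/Rle_lt_or_eq_dec => [/exp_increasing/Rlt_le | ->]; [|apply: Rle_refl].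
Qed.

Lemma exp_convex x y t : 0 <= t <= 1 ->
  exp (t * x + (1 - t) * y) <= t * exp x + (1 - t) * exp y.
Proof.
move=> Ht; set z := t * x + (1 - t) * y.
have tangent u : exp z * (1 + (u - z)) <= exp u.
  have -> : exp u = exp z * exp (u - z) by rewrite -exp_plus; f_equal; ring.
  by apply: Rmult_le_compat_l; [apply: Rlt_le; apply: exp_pos | apply: exp_ineq1_le].
have Hx := Rmult_le_compat_l t _ _ (proj1 Ht) (tangent x).
have Hy := Rmult_le_compat_l (1 - t) _ _ ltac:(lra) (tangent y).
have -> : exp z = t * (exp z * (1 + (x - z))) + (1 - t) * (exp z * (1 + (y - z)))
  by rewrite /z; ring.
lra.
Qed.

Lemma one_sub_exp_opp_bounds u : 0 <= u -> 0 <= 1 - exp (- u) <= u.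
Proof.
move=> Hu; have := exp_ineq1_le (- u).
have : exp (- u) <= 1 by rewrite -exp_0; apply: exp_le_compat; lra.
lra.
Qed.

Lemma is_derive_has_deriv_nonneg (f f' : R -> R) :
  (forall r, 0 <= r -> is_derive f r (f' r)) -> has_deriv_nonneg f f'.
Proof.
move=> Hf r Hr P [e HP].
have [delta Hdelta] := proj1 (is_derive_Reals f r (f' r)) (Hf r Hr) e (cond_pos e).
exists delta => y Hy [_ Hyr]; apply HP.
have := Hdelta (y - r) ltac:(lra) Hy.
by rewrite Rplus_minus.
Qed.

Lemma continuous_cont_nonneg (g : R -> R) :
  (forall r, 0 <= r -> continuous g r) -> cont_nonneg g.
Proof.
move=> Hg r Hr P HP; have := Hg r Hr P HP.
rewrite /filtermap /within; apply: filter_imp; auto.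
Qed.

Definition profile (delta beta r : R) :=
  delta * r + (1 - delta) / beta * (1 - exp (- (beta * r))).
Definition profile' (delta beta r : R) := delta + (1 - delta) * exp (- (beta * r)).
Definition profile'' (delta beta r : R) :=
  - (beta * (1 - delta) * exp (- (beta * r))).

Section Profile.

Context {delta beta : R}.
Hypothesis delta_pos : 0 < delta.
Hypothesis delta_le1 : delta <= 1.
Hypothesis beta_pos : 0 < beta.

Lemma profile0 : profile delta beta 0 = 0.
Proof. by rewrite /profile !Rmult_0_r Ropp_0 exp_0; ring. Qed.

Lemma is_derive_profile r : is_derive (profile delta beta) r (profile' delta beta r).
Proof. rewrite /profile /profile'; auto_derive => //; field; lra. Qed.

Lemma is_derive_profile' r : is_derive (profile' delta beta) r (profile'' delta beta r).
Proof. rewrite /profile' /profile''; auto_derive => //; ring. Qed.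

Lemma continuous_profile'' r : continuous (profile'' delta beta) r.
Proof. apply: ex_derive_continuous; rewrite /profile''; auto_derive => //. Qed.

Lemma C2_profile :
  C2_nonneg (profile delta beta) (profile' delta beta) (profile'' delta beta).
Proof.
split; [|split].
- by apply: is_derive_has_deriv_nonneg => r _; apply: is_derive_profile.
- by apply: is_derive_has_deriv_nonneg => r _; apply: is_derive_profile'.
- by apply: continuous_cont_nonneg => r _; apply: continuous_profile''.
Qed.

Lemma profile'_ge r : delta <= profile' delta beta r.
Proof. have := exp_pos (- (beta * r)); rewrite /profile'; nra. Qed.

Lemma profile''_le0 r : profile'' delta beta r <= 0.
Proof.
have He := exp_pos (- (beta * r)); have Hbd : 0 <= beta * (1 - delta) by nra.
rewrite /profile''; nra.
Qed.

Lemma profile_bounds r : 0 <= r -> delta * r <= profile delta beta r <= r.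
Proof.
move=> Hr; have Hexp := one_sub_exp_opp_bounds (beta * r) ltac:(nra).
have Ha : 0 <= (1 - delta) / beta by apply: Rdiv_le_0_compat; lra.
have Hab : (1 - delta) / beta * beta = 1 - delta by field; lra.
rewrite /profile; nra.
Qed.

Lemma concave_profile : concave_nonneg (profile delta beta).
Proof.
move=> x y t _ _ Ht.
have := exp_convex (- (beta * x)) (- (beta * y)) t Ht.
have -> : t * - (beta * x) + (1 - t) * - (beta * y) = - (beta * (t * x + (1 - t) * y))
  by ring.
have Ha : 0 <= (1 - delta) / beta by apply: Rdiv_le_0_compat; lra.
rewrite /profile; nra.
Qed.

Lemma strict_incr_profile : strict_incr_nonneg (profile delta beta).
Proof.
move=> x y _ Hxy.
have He : exp (- (beta * y)) < exp (- (beta * x)) by apply: exp_increasing; nra.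
have Ha : 0 <= (1 - delta) / beta by apply: Rdiv_le_0_compat; lra.
rewrite /profile; nra.
Qed.

Lemma profile_drift_le_lower K r k : 0 <= K -> - K <= r * k ->
  profile'' delta beta r - / 4 * r * k * profile' delta beta r
    <= - (beta - K / 4) * (1 - delta) * exp (- (beta * r)) + K * delta / 4.
Proof.
move=> HK Hk; have := profile'_ge r.
rewrite /profile'' /profile'; nra.
Qed.

Lemma profile_drift_le_coercive eps r k : 0 <= r -> 0 <= eps <= k ->
  profile'' delta beta r - / 4 * r * k * profile' delta beta r
    <= - (eps * delta / 4) * r.
Proof.
move=> Hr Hk; have := profile'_ge r; have := profile''_le0 r.
have : r * eps <= r * k by apply: Rmult_le_compat_l; lra.
have : 0 <= r * eps by nra.
nra.
Qed.

End Profile.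

Definition profile_rate K := K / 4 + 1.
Definition profile_slope K R1 := exp (- (profile_rate K * R1)) / (2 * (K + 1)).
Definition profile_gap K R1 eps :=
  Rmin (exp (- (profile_rate K * R1)) / (2 * R1)) (eps * profile_slope K R1 / 2).

Section Constants.

Variables K R1 eps : R.
Hypothesis K_ge0 : 0 <= K.
Hypothesis R1_pos : 0 < R1.
Hypothesis eps_pos : 0 < eps.

Local Notation beta := (profile_rate K).
Local Notation delta := (profile_slope K R1).
Local Notation c0 := (profile_gap K R1 eps).
Local Notation E := (exp (- (profile_rate K * R1))).

Lemma profile_rate_pos : 0 < beta.
Proof. rewrite /profile_rate; lra. Qed.

Lemma profile_slope_pos : 0 < delta.
Proof. by apply: Rdiv_lt_0_compat; [apply: exp_pos | lra]. Qed.

Lemma profile_slope_le_half : delta <= 1 / 2.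
Proof.
have HE : E <= 1.
  by rewrite -exp_0; apply: exp_le_compat; have := profile_rate_pos; nra.
rewrite /profile_slope; apply: (Rmult_le_reg_r (2 * (K + 1))); first lra.
by field_simplify; nra.
Qed.

Lemma mul_profile_slope_le : K * delta <= E / 2.
Proof.
have HE := exp_pos (- (beta * R1)).
have -> : K * delta = E / 2 * (K / (K + 1)) by rewrite /profile_slope; field; lra.
have : K / (K + 1) <= 1.
  by apply: (Rmult_le_reg_r (K + 1)); [lra | field_simplify; lra].
nra.
Qed.

Lemma profile_gap_pos : 0 < c0.
Proof.
have HE := exp_pos (- (beta * R1)); have Hdelta := profile_slope_pos.
apply: Rmin_glb_lt; first by apply: Rdiv_lt_0_compat; lra.
nra.
Qed.

Lemma profile_supersolution (kappa : R -> R) :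
  (forall r, 0 <= r <= R1 -> - K <= r * kappa r) ->
  (forall r, R1 <= r -> eps <= kappa r) ->
  forall r, 0 <= r ->
    profile'' delta beta r - / 4 * r * kappa r * profile' delta beta r
    <= - (c0 / 2) * profile delta beta r.
Proof.
move=> near far r Hr.
have Hdelta := profile_slope_pos; have Hdelta2 := profile_slope_le_half.
have Hdelta1 : delta <= 1 by lra.
have Hbeta := profile_rate_pos.
have [_ Hf_le] := profile_bounds Hdelta1 Hbeta r Hr.
have Hc0 := profile_gap_pos.
case: (Rle_lt_dec r R1) => Hr1.
- have Hc0_near : c0 * R1 <= E / 2.
    have -> : E / 2 = E / (2 * R1) * R1 by field; lra.
    by apply: Rmult_le_compat_r; [lra | apply: Rmin_l].
  have Hdrift := profile_drift_le_lower (beta := beta) Hdelta Hdelta1 _ _ _ K_ge0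
    (near r (conj Hr Hr1)).
  have Hbeta_K : beta - K / 4 = 1 by rewrite /profile_rate; ring.
  rewrite Hbeta_K in Hdrift.
  have HEpos := exp_pos (- (beta * R1)).
  have HE : E <= exp (- (beta * r)) by apply: exp_le_compat; nra.
  have Hmargin : E / 2 <= (1 - delta) * exp (- (beta * r)) by nra.
  have HKdelta := mul_profile_slope_le.
  have Hf : c0 * profile delta beta r <= c0 * R1 by apply: Rmult_le_compat_l; lra.
  lra.
- have Hdrift :=
    profile_drift_le_coercive (beta := beta) Hdelta Hdelta1 Hbeta _ _ _ Hr
      (conj (Rlt_le _ _ eps_pos) (far r (Rlt_le _ _ Hr1))).
  have Hc0_far : c0 <= eps * delta / 2 by apply: Rmin_r.
  nra.
Qed.

End Constants.

Theorem lemma1 (kappa : R -> R) :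
  (forall r, 0 < r -> continuous kappa r) ->
  (exists m, forall r, 0 < r -> m <= kappa r) ->
  (exists eps, 0 < eps /\ exists R0, forall r, R0 <= r -> eps <= kappa r) ->
  exists c0 phi0, 0 < c0 /\ 0 < phi0 /\
  forall (d : nat) (sigma : R) (b : vec d -> vec d),
    0 < sigma ->
    (forall r, 0 < r -> forall x y : vec d, vnorm (vsub x y) = r ->
       kappa r <= - (2 / sigma ^ 2) *
         (vdot (vsub x y) (vsub (b x) (b y)) / (vnorm (vsub x y)) ^ 2)) ->
    exists f : R -> R,
      (f 0 = 0 /\ concave_nonneg f /\ strict_incr_nonneg f) /\
      (exists f1 f2 : R -> R, C2_nonneg f f1 f2 /\
         forall r, 0 <= r -> f2 r - / 4 * r * kappa r * f1 r <= - (c0 / 2) * f r) /\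
      (forall r, 0 <= r -> phi0 / 4 * r <= f r /\ f r <= r).
Proof.
move=> _ [m Hm] [eps [Heps [R0 HR0]]].
set R1 := Rmax R0 1; set K := R1 * Rabs m.
have HR1 : 1 <= R1 by apply: Rmax_r.
have HK : 0 <= K by apply: Rmult_le_pos; [lra | apply: Rabs_pos].
have near r : 0 <= r <= R1 -> - K <= r * kappa r.
  case=> /Rle_lt_or_eq_dec [Hr | <-] Hr1; last by rewrite Rmult_0_l; lra.
  have Hk := Hm r Hr; have Hm_abs := Rabs_maj2 m; have Habs := Rabs_pos m.
  rewrite /K; nra.
have far r : R1 <= r -> eps <= kappa r.
  by move=> Hr; apply: HR0; have := Rmax_l R0 1; rewrite -/R1; lra.
set beta := profile_rate K; set delta := profile_slope K R1.
have Hbeta : 0 < beta := profile_rate_pos K HK.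
have Hdelta : 0 < delta := profile_slope_pos K R1 HK.
have Hdelta2 : delta <= 1 / 2 := profile_slope_le_half K R1 HK ltac:(lra).
have Hdelta1 : delta <= 1 by lra.
exists (profile_gap K R1 eps), (4 * delta).
split; first by apply: profile_gap_pos; lra.
split; first lra.
move=> d sigma b _ _; exists (profile delta beta).
split; [|split].
- split; first exact: profile0.
  by split; [apply: concave_profile | apply: strict_incr_profile].
- exists (profile' delta beta), (profile'' delta beta).
  split; first exact: C2_profile.
  by apply: profile_supersolution => //; lra.
- by move=> r Hr; have := profile_bounds Hdelta1 Hbeta r Hr; lra.
Qed.
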